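(* Let $G$ be an oriented graph and let $a,b$ be positive integers. Then $\chi^*_o(G) \leq \frac{a}{b}$ if and only if there exist a positive integer $c$ and a consistent sub-orientation $\overrightarrow{KG}_{ac,bc}$ of the Kneser graph $KG_{ac,bc}$ such that $G$ admits a homomorphism to $\overrightarrow{KG}_{ac,bc}$.
   Context: An oriented graph is a finite directed graph with no directed cycle of length 1 or 2. For a set $S$ of $k$ colors let $P_b(S)$ be the set of $b$-element subsets of $S$. A $b$-fold oriented $k$-coloring of an oriented graph $G$ is a map $f: V(G) \to P_b(S)$ with $|S|=k$ such that (i) $f(x)\cap f(y)=\emptyset$ for every arc $xy$, and (ii) for all arcs $xy, zw$, $f(x)\cap f(w)\neq\emptyset$ implies $f(y)\cap f(z)=\emptyset$. The $b$-fold oriented chromatic number $\chi^b_o(G)$ is the minimum $k$ such that $G$ admits a $b$-fold oriented $k$-coloring, and the fractional oriented chromatic number is $\chi^*_o(G)=\lim_{b\to\infty}\chi^b_o(G)/b=\inf_{b\geq 1}\chi^b_o(G)/b$. A homomorphism of an oriented graph $G$ to an oriented graph $H$ is a map $f:V(G)\to V(H)$ such that $f(x)f(y)$ is an arc of $H$ whenever $xy$ is an arc of $G$. The Kneser graph $KG_{a,b}$ has the $b$-subsets of an $a$-set as vertices, two being adjacent iff they are disjoint. A consistent sub-orientation of $KG_{a,b}$ is an oriented graph $\overrightarrow{KG}_{a,b}$ whose underlying graph is a subgraph of $KG_{a,b}$ and such that for any two arcs $xy$ and $wz$, $x\cap z\neq\emptyset$ implies $y\cap w=\emptyset$. *)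

From HB Require Import structures.
From mathcomp Require Import all_boot all_order all_algebra.
From mathcomp Require Import boolp classical_sets reals.
Set Implicit Arguments. Unset Strict Implicit. Unset Printing Implicit Defensive.
Import Order.TTheory GRing.Theory Num.Theory.

Definition oriented (V : finType) (arc : rel V) : Prop :=
  (forall x, ~~ arc x x) /\ (forall x y, arc x y -> ~~ arc y x).

Definition is_bfold_ocoloring (V : finType) (arc : rel V) (b k : nat)
  (f : V -> {set 'I_k}) : Prop :=
  [/\ (forall x, #|f x| = b),
      (forall x y, arc x y -> [disjoint f x & f y]) &
      (forall x y z w, arc x y -> arc z w ->
          ~~ [disjoint f x & f w] -> [disjoint f y & f z])].

Definition ocolorable (V : finType) (arc : rel V) (b k : nat) : bool :=
  `[< exists f : V -> {set 'I_k}, is_bfold_ocoloring arc b f >].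

(* chi^b_o(G): the least k admitting a b-fold oriented k-coloring
   (defaults to 0 if none exists, which never happens for oriented graphs). *)
Definition bfold_ochi (V : finType) (arc : rel V) (b : nat) : nat :=
  match pselect (exists k, ocolorable arc b k) with
  | left h => ex_minn h
  | right _ => 0%N
  end.

Definition frac_ochi (R : realType) (V : finType) (arc : rel V) : R :=
  inf [set ((bfold_ochi arc b)%:R / b%:R)%R | b in [set b : nat | (0 < b)%N]]%classic.

(* Its vertex set is the set of all m-subsets of 'I_n. *)
Definition consistent_suborientation (n m : nat) (A : rel {set 'I_n}) : Prop :=
  [/\ (forall x y, A x y -> #|x| = m /\ #|y| = m),
      (forall x y, A x y -> [disjoint x & y]),
      oriented A &
      (forall x y w z, A x y -> A w z -> ~~ [disjoint x & z] -> [disjoint y & w])].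

Definition kneser_hom (V : finType) (arc : rel V) (n m : nat)
  (A : rel {set 'I_n}) (g : V -> {set 'I_n}) : Prop :=
  (forall x, #|g x| = m) /\ (forall x y, arc x y -> A (g x) (g y)).

From HB Require Import structures.
From mathcomp Require Import all_boot all_order all_algebra.
From mathcomp Require Import boolp classical_sets reals.
From mathcomp Require Import ring lra.
Set Implicit Arguments. Unset Strict Implicit. Unset Printing Implicit Defensive.
Import Order.TTheory GRing.Theory Num.Theory.

(* A b-fold oriented k-colouring (b > 0) is the same thing as a homomorphism into a
   consistent sub-orientation of KG_{k,b}: take the image of the arcs. So it suffices to
   show that chi*_o(G) <= a/b iff G has a bc-fold oriented ac-colouring for some c > 0.

   The colour classes of an oriented colouring form a family C of vertex sets that is
   pairwise consistent, and conversely a multiset of classes of such a C covering every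
   vertex exactly m times, with k classes in total, is an m-fold oriented k-colouring.
   Hence chi*_o(G) is the infimum, over the finitely many consistent families C, of the
   least total weight of a fractional exact cover of V by classes of C. For a fixed C the
   achievable weights form a closed subset of Q: eliminating all other variables by
   Fourier-Motzkin leaves finitely many linear inequalities in the weight. By pigeonhole
   one C achieves every weight > a/b, hence a/b itself with rational class weights, and
   clearing denominators gives the colouring. *)

Local Open Scope ring_scope.

Section FourierMotzkin.
Variables (F : realFieldType) (I : finType).
Notation constraint := ({ffun I -> F} * F)%type.
Implicit Types (c : {ffun I -> F}) (x : I -> F) (j : I) (y : F).
Implicit Types (p n : constraint) (L : seq constraint).

Definition lform c x := \sum_i c i * x i.

Definition satisfies x p : bool := p.2 <= lform p.1 x.

Definition upd x j y : I -> F := fun i => if i == j then y else x i.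

Lemma upd_id x j : upd x j (x j) = x.
Proof. by apply: funext => i; rewrite /upd; case: eqP => // ->. Qed.

Lemma upd_upd x j y y' : upd (upd x j y) j y' = upd x j y'.
Proof. by apply: funext => i; rewrite /upd; case: eqP. Qed.

Lemma lform_upd c x j y :
  lform c (upd x j y) = lform c (upd x j 0) + c j * y.
Proof.
rewrite /lform (bigD1 j) //= [in RHS](bigD1 j) //= /upd !eqxx mulr0 add0r addrC.
by congr (_ + _); apply: eq_bigr => i /negbTE ->.
Qed.

Lemma lform_upd_free c x j y : c j = 0 -> lform c (upd x j y) = lform c x.
Proof. by move=> cj0; rewrite -{2}(upd_id x j) lform_upd [RHS]lform_upd cj0 !mul0r. Qed.

(* A nonnegative combination of [p] and [n] when [0 < p.1 j] and [n.1 j < 0], with [j]-th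
   coefficient [0]. *)
Definition comb j p n : constraint :=
  ([ffun i => - n.1 j * p.1 i + p.1 j * n.1 i], - n.1 j * p.2 + p.1 j * n.2).

Lemma lform_comb j p n x :
  lform (comb j p n).1 x = - n.1 j * lform p.1 x + p.1 j * lform n.1 x.
Proof.
rewrite /lform !mulr_sumr -big_split; apply: eq_bigr => i _ /=.
by rewrite !ffunE /=; ring.
Qed.

(* The value of [y] at which [p] becomes tight on the line [upd x j y]. *)
Definition tight_at j x p := (p.2 - lform p.1 (upd x j 0)) / p.1 j.

Lemma satisfies_upd_pos j x y p :
  0 < p.1 j -> satisfies (upd x j y) p = (tight_at j x p <= y).
Proof. by move=> pj; rewrite /satisfies lform_upd ler_pdivrMr // -lerBlDl mulrC. Qed.

Lemma satisfies_upd_neg j x y p :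
  p.1 j < 0 -> satisfies (upd x j y) p = (y <= tight_at j x p).
Proof. by move=> pj; rewrite /satisfies lform_upd ler_ndivlMr // -lerBlDl mulrC. Qed.

Lemma satisfies_comb j x p n : 0 < p.1 j -> n.1 j < 0 ->
  satisfies x (comb j p n) = (tight_at j x p <= tight_at j x n).
Proof.
move=> pj nj; rewrite /satisfies -(upd_id x j) lform_comb.
rewrite (lform_upd p.1) (lform_upd n.1) /tight_at !upd_upd.
rewrite ler_pdivrMr // mulrAC ler_ndivlMr //=.
by apply/idP/idP => h; lra.
Qed.

Lemma exists_between (ls us : seq F) :
  (forall l u, l \in ls -> u \in us -> l <= u) ->
  exists y, (forall l, l \in ls -> l <= y) /\ (forall u, u \in us -> y <= u).
Proof.
elim: ls => [|l ls IH] lsus.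
  elim: us {lsus} => [|u us [y [_ yus]]]; first by exists 0.
  exists (Order.min y u); split=> // u'; rewrite inE ge_min.
  by case/orP=> [/eqP->|/yus->]; rewrite ?lexx ?orbT.
have [|y [lsy yus]] := IH; first by move=> l' u l'ls; apply: lsus; rewrite inE l'ls orbT.
exists (Order.max l y); split.
  by move=> l'; rewrite inE le_max => /orP[/eqP->|/lsy->]; rewrite ?lexx ?orbT.
by move=> u uus; rewrite ge_max yus // andbT; apply: lsus; rewrite ?mem_head.
Qed.

Definition fm j L : seq constraint :=
  [seq p <- L | (p : constraint).1 j == 0] ++
  [seq comb j p n | p <- [seq p <- L | 0 < (p : constraint).1 j],
                    n <- [seq n <- L | (n : constraint).1 j < 0]].

Lemma fm_sound j L x y : all (satisfies (upd x j y)) L -> all (satisfies x) (fm j L).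
Proof.
move=> /allP satL; apply/allP => q; rewrite mem_cat => /orP[].
  by rewrite mem_filter => /andP[/eqP qj0 /satL]; rewrite /satisfies lform_upd_free.
case/allpairsP => -[p n] /= [+ + ->]; rewrite !mem_filter => /andP[pj pL] /andP[nj nL].
rewrite satisfies_comb // (@le_trans _ _ y) //.
  by rewrite -satisfies_upd_pos ?satL.
by rewrite -satisfies_upd_neg ?satL.
Qed.

Lemma fm_complete j L x : all (satisfies x) (fm j L) -> exists y, all (satisfies (upd x j y)) L.
Proof.
move=> /allP satfm.
pose lower := [seq tight_at j x p | p <- L & 0 < p.1 j].
pose upper := [seq tight_at j x n | n <- L & n.1 j < 0].
have [y [lower_y y_upper]] : exists y,
    (forall l, l \in lower -> l <= y) /\ (forall u, u \in upper -> y <= u).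
  apply: exists_between => _ _ /mapP[p pL ->] /mapP[n nL ->].
  move: (pL) (nL); rewrite !mem_filter => /andP[pj _] /andP[nj _].
  rewrite -satisfies_comb // satfm // mem_cat; apply/orP; right.
  by apply/allpairsP; exists (p, n).
exists y; apply/allP => p pL; case: (ltgtP (p.1 j) 0) => pj.
- by rewrite satisfies_upd_neg // y_upper // map_f // mem_filter pj.
- by rewrite satisfies_upd_pos // lower_y // map_f // mem_filter pj.
- by rewrite /satisfies lform_upd_free // -/(satisfies x p) satfm // mem_cat mem_filter pj eqxx pL.
Qed.

Definition fm_seq (js : seq I) L := foldl (fun L j => fm j L) L js.

Lemma fm_seqP js L x :
  (exists x', (forall i, i \notin js -> x' i = x i) /\ all (satisfies x') L) <->
  all (satisfies x) (fm_seq js L).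
Proof.
elim: js L x => [|j js IH] L x /=.
  split=> [[x' [x'x satL]]|satL]; last by exists x.
  by rewrite (_ : x = x') //; apply: funext => i; rewrite x'x.
rewrite -IH; split=> [[x' [x'x satL]]|[x' [x'x /fm_complete[y satL]]]].
  exists (upd x' j (x j)); split; last by apply: (fm_sound (y := x' j)); rewrite upd_upd upd_id.
  move=> i; rewrite /upd; case: eqP => [->|/eqP ij] // ijs.
  by rewrite x'x // inE negb_or ij.
exists (upd x' j y); split=> // i; rewrite inE negb_or /upd => /andP[/negbTE-> ijs].
exact: x'x.
Qed.

Lemma lform_point c j z : lform c (upd (fun=> 0) j z) = c j * z.
Proof.
rewrite lform_upd /lform big1 ?add0r // => i _.
by rewrite /upd; case: eqP; rewrite mulr0.
Qed.

Lemma fm_projectP j L z :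
  (exists x, x j = z /\ all (satisfies x) L) <->
  all (fun p => p.2 <= p.1 j * z) (fm_seq [seq i <- enum I | i != j] L).
Proof.
rewrite (eq_all (a2 := satisfies (upd (fun=> 0) j z))); last first.
  by move=> p; rewrite /satisfies lform_point.
rewrite -fm_seqP; split=> [[x [xj satL]]|[x [xj satL]]]; exists x; split=> //.
  by move=> i; rewrite mem_filter mem_enum andbT negbK /upd => /eqP->; rewrite eqxx.
by rewrite xj ?mem_filter ?eqxx // /upd eqxx.
Qed.

End FourierMotzkin.

Lemma ler_lim_addinv (F : archiRealFieldType) (c d s : F) :
  (forall m : nat, d <= c * (s + m.+1%:R^-1)) -> d <= c * s.
Proof.
move=> lim; rewrite leNgt; apply/negP => lt_cs_d.
have [c_le0|c_gt0] := lerP c 0.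
  by have := lim 0%N; rewrite invr1 mulrDr; lra.
have gap_gt0 : 0 < d - c * s by rewrite subr_gt0.
have := archi_boundP (ltW (divr_gt0 c_gt0 gap_gt0)); set m := Num.Def.archi_bound _.
rewrite ltr_pdivrMr // => c_lt.
have : c / m.+1%:R < d - c * s.
  rewrite ltr_pdivrMr ?ltr0n //; apply: (lt_le_trans c_lt).
  by rewrite mulrC ler_wpM2l ?(ltW gap_gt0) // ler_nat.
by have := lim m; rewrite mulrDr -lerBlDl => gap_le; rewrite ltNge gap_le.
Qed.

Lemma fm_project_closed (F : archiRealFieldType) (I : finType)
    (L : seq ({ffun I -> F} * F)) j s :
  (forall m : nat, exists x, x j = s + m.+1%:R^-1 /\ all (satisfies x) L) ->
  exists x, x j = s /\ all (satisfies x) L.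
Proof.
move=> near; apply/fm_projectP/allP => p pL; apply: ler_lim_addinv => m.
by have /fm_projectP/allP/(_ p pL) := near m.
Qed.

Local Close Scope ring_scope.

Lemma disjointP (T : finType) (A B : {set T}) :
  reflect (forall x, x \in A -> x \in B -> False) [disjoint A & B].
Proof.
apply: (iffP pred0P) => [AB0 x xA xB|AB x /=]; first by have := AB0 x; rewrite /= xA xB.
by apply/negP => /andP[]; apply: AB.
Qed.

Section OrientedColorings.
Variables (V : finType) (arc : rel V).

Lemma kneser_hom_ocoloring n m (A : rel {set 'I_n}) g :
  consistent_suborientation m A -> kneser_hom arc m A g -> is_bfold_ocoloring arc m g.
Proof.
case=> _ A_disj _ A_cons [g_card g_hom]; split=> // [x y xy|x y z w xy zw].
  exact/A_disj/g_hom.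
by apply: A_cons; apply: g_hom.
Qed.

Lemma ocoloring_kneser_hom n m (g : V -> {set 'I_n}) : 0 < m ->
  is_bfold_ocoloring arc m g ->
  exists A : rel {set 'I_n}, consistent_suborientation m A /\ kneser_hom arc m A g.
Proof.
move=> m_gt0 [g_card g_disj g_cons].
have g_meet v : ~~ [disjoint g v & g v].
  by rewrite -setI_eq0 finset.setIid -card_gt0 g_card.
pose A X Y := [exists u, exists v, [&& arc u v, g u == X & g v == Y]].
have AP X Y : A X Y -> exists u v, [/\ arc u v, g u = X & g v = Y].
  by case/existsP=> u /existsP[v /and3P[uv /eqP gu /eqP gv]]; exists u, v.
exists A; split; last first.
  by split=> // x y xy; apply/existsP; exists x; apply/existsP; exists y; rewrite xy !eqxx.
split.
- by move=> X Y /AP[u [v [_ <- <-]]].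
- by move=> X Y /AP[u [v [uv <- <-]]]; apply: g_disj.
- split=> [X|X Y /AP[u [v [uv gu gv]]]]; apply/negP.
    by case/AP=> u [v [uv gu gv]]; have := g_disj _ _ uv; rewrite gu -gv (negbTE (g_meet v)).
  case/AP=> u' [v' [u'v' gu' gv']].
  have := g_cons _ _ _ _ uv u'v'; rewrite gu -gv' g_meet gv -gu' => /(_ isT).
  by rewrite (negbTE (g_meet u')).
- by move=> X Y W Z /AP[u [v [uv <- <-]]] /AP[u' [v' [u'v' <- <-]]]; apply: g_cons.
Qed.

(* Condition (ii) of an oriented colouring, read on colour classes [S] (of a colour in
   [f x :&: f w]) and [S'] (of a colour in [f y :&: f z]). *)
Definition consistent_classes (C : {set {set V}}) : Prop :=
  forall S S', S \in C -> S' \in C -> forall x y z w,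
    x \in S -> w \in S -> y \in S' -> z \in S' -> arc x y -> arc z w -> False.

Definition color_classes k (f : V -> {set 'I_k}) : {set {set V}} :=
  [set [set v | i \in f v] | i : 'I_k].

Lemma color_classes_consistent b k (f : V -> {set 'I_k}) :
  is_bfold_ocoloring arc b f -> consistent_classes (color_classes f).
Proof.
case=> _ _ f_cons S S' /imsetP[i _ ->] /imsetP[j _ ->] x y z w.
rewrite !inE => xi wi yj zj xy zw.
have xw : ~~ [disjoint f x & f w] by apply/negP => /disjointP/(_ i xi wi).
by have /disjointP/(_ j yj zj) := f_cons _ _ _ _ xy zw xw.
Qed.

Definition realize N (s : seq {set V}) v : {set 'I_N} :=
  [set i : 'I_N | v \in nth finset.set0 s i].

Lemma realize_class N s v (i : 'I_N) :
  i \in realize N s v -> nth finset.set0 s i \in s /\ v \in nth finset.set0 s i.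
Proof.
rewrite inE => vi; split=> //; apply: mem_nth.
by rewrite ltnNge; apply: contraL vi => /(nth_default finset.set0) ->; rewrite inE.
Qed.

Lemma card_realize N s v :
  size s <= N -> #|realize N s v| = count [pred S : {set V} | v \in S] s.
Proof.
rewrite -sum1_card big_mkcond /=; under eq_bigr do rewrite inE.
elim: s N => [|S s IH] [|N] //= s_le.
- by rewrite big_ord0.
- by rewrite big1 // => i _; rewrite nth_nil inE.
- by rewrite big_ord_recl /= IH.
Qed.

Lemma realize_ocoloring N C s m : consistent_classes C -> {subset s <= C} ->
  size s <= N -> (forall v, count [pred S : {set V} | v \in S] s = m) ->
  is_bfold_ocoloring arc m (realize N s).
Proof.
move=> C_cons sC s_le s_count; split=> [v|x y xy|x y z w xy zw].
- by rewrite card_realize.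
- apply/disjointP => i /realize_class[/sC Si xi] /realize_class[_ yi].
  exact: (C_cons _ _ Si Si x y x y xi yi yi xi xy xy).
- move=> /disjointP xw; apply/disjointP => j /realize_class[/sC Sj yj] /realize_class[_ zj].
  apply: xw => i /realize_class[/sC Si xi] /realize_class[_ wi].
  exact: (C_cons _ _ Si Sj x y z w xi wi yj zj xy zw).
Qed.

End OrientedColorings.

Lemma sum_option (M : nmodType) (T : finType) (F : option T -> M) :
  (\sum_i F i = F None + \sum_j F (Some j))%R.
Proof.
rewrite (bigD1 None) //= (reindex_omap Some id) => [|[]] //=.
by under eq_bigl do rewrite eqxx.
Qed.

Section FractionalCovers.
Variable V : finType.
Local Open Scope ring_scope.

(* [x (Some S)] is the weight of the class [S] and [x None] bounds the total weight. *)
Definition frac_cover (C : {set {set V}}) (x : option {set V} -> rat) : Prop :=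
  [/\ forall S, 0 <= x (Some S),
      forall S, S \notin C -> x (Some S) <= 0,
      forall v, \sum_(S : {set V} | v \in S) x (Some S) = 1 &
      \sum_(S : {set V}) x (Some S) <= x None].

Definition has_frac_cover C (z : rat) := exists x, x None = z /\ frac_cover C x.

Lemma has_frac_cover_le C z z' : z <= z' -> has_frac_cover C z -> has_frac_cover C z'.
Proof.
move=> zz' [x [xz [x_ge0 x_out x_cov x_tot]]].
exists (upd x None z'); split; first by rewrite /upd eqxx.
by split=> [S|S /x_out|v|]; rewrite /upd /= ?eqxx // (le_trans x_tot) ?xz.
Qed.

Notation constraint := ({ffun option {set V} -> rat} * rat)%type.

Definition delta (i : option {set V}) : {ffun option {set V} -> rat} :=
  [ffun i' => (i' == i)%:R].

Definition cover_vector (v : V) : {ffun option {set V} -> rat} :=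
  [ffun i : option {set V} => (if i is Some X then (v \in X)%:R else 0) : rat].

Definition total_vector : {ffun option {set V} -> rat} :=
  [ffun i : option {set V} => (if i is Some _ then -1 else 1) : rat].

Definition cover_lp C : seq constraint :=
  [seq (delta (Some X), 0) | X <- index_enum {set V}] ++
  [seq (- delta (Some X), 0) | X <- enum (~: C)] ++
  [seq (cover_vector v, 1) | v <- index_enum V] ++
  [seq (- cover_vector v, -1) | v <- index_enum V] ++
  [:: (total_vector, 0)].

Lemma lformN (c : {ffun option {set V} -> rat}) x : lform (- c) x = - lform c x.
Proof. by rewrite /lform -sumrN; apply: eq_bigr => i _; rewrite ffunE mulNr. Qed.

Lemma lform_delta i x : lform (delta i) x = x i.
Proof.
rewrite /lform (bigD1 i) //= big1 ?addr0 => [|j /negbTE ji]; rewrite ffunE ?ji ?mul0r //.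
by rewrite eqxx mul1r.
Qed.

Lemma lform_cover_vector v x :
  lform (cover_vector v) x = \sum_(S : {set V} | v \in S) x (Some S).
Proof.
rewrite /lform sum_option ffunE mul0r add0r [RHS]big_mkcond.
by apply: eq_bigr => S _; rewrite ffunE; case: (v \in S); rewrite ?mul1r ?mul0r.
Qed.

Lemma lform_total_vector x : lform total_vector x = x None - \sum_(S : {set V}) x (Some S).
Proof.
rewrite /lform sum_option ffunE mul1r -sumrN.
by congr (_ + _); apply: eq_bigr => S _; rewrite ffunE mulN1r.
Qed.

Lemma cover_lpP C x : all (satisfies x) (cover_lp C) <-> frac_cover C x.
Proof.
rewrite /cover_lp !all_cat !all_map all_seq1 /satisfies.
split=> [/and5P[/allP x_ge0 /allP x_out /allP x_ge1 /allP x_le1 x_tot]|].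
  split=> [X|X XC|v|].
  - by have := x_ge0 X; rewrite mem_index_enum /= lform_delta => ->.
  - by have := x_out X; rewrite mem_enum inE XC /= lformN lform_delta oppr_ge0 => ->.
  - have := x_ge1 v; have := x_le1 v.
    rewrite mem_index_enum /= lformN !lform_cover_vector lerN2 => /(_ isT) le1 /(_ isT) ge1.
    by apply/eqP; rewrite eq_le le1 ge1.
  - by move: x_tot; rewrite /= lform_total_vector subr_ge0.
case=> x_ge0 x_out x_cov x_tot; apply/and5P; split.
- by apply/allP => X _ /=; rewrite lform_delta.
- by apply/allP => X; rewrite mem_enum inE => /x_out /=; rewrite lformN lform_delta oppr_ge0.
- by apply/allP => v _ /=; rewrite lform_cover_vector x_cov.
- by apply/allP => v _ /=; rewrite lformN lform_cover_vector x_cov.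
- by rewrite /= lform_total_vector subr_ge0.
Qed.

Lemma has_frac_cover_closed C s :
  (forall m : nat, has_frac_cover C (s + m.+1%:R^-1)) -> has_frac_cover C s.
Proof.
move=> near; have [|x [xs /cover_lpP]] := @fm_project_closed _ _ (cover_lp C) None s.
  by move=> m; have [x [xz /cover_lpP]] := near m; exists x.
by exists x.
Qed.

End FractionalCovers.

Lemma clear_denominators (T : finType) (t : T -> rat) : (forall i, 0 <= t i)%R ->
  exists2 q : nat, 0 < q & exists n : T -> nat, forall i, (t i * q%:R = (n i)%:R)%R.
Proof.
move=> t_ge0; pose q := \prod_i `|denq (t i)|.
exists q; first by apply: prodn_gt0 => i; rewrite absz_gt0 denq_neq0.
exists (fun i => `|numq (t i)| * \prod_(j | j != i) `|denq (t j)|) => i.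
rewrite /q (bigD1 i) //= !natrM mulrA; congr (_ * _)%R.
rewrite !natr_absz gtr0_norm ?denq_gt0 // ger0_norm ?numq_ge0 //.
by rewrite -numqE.
Qed.

Lemma sum_card_fibers (I T : finType) (g : I -> T) (P : pred T) :
  \sum_(X | P X) #|[set i | g i == X]| = #|[set i | P (g i)]|.
Proof.
rewrite -sum1dep_card (partition_big g P) //=; apply: eq_bigr => X PX.
rewrite -sum1dep_card; apply: eq_bigl => i.
by case: eqP => [->|]; rewrite ?PX ?andbF ?andbT.
Qed.

Section IntegerCovers.
Variables (V : finType) (arc : rel V).

Lemma count_flatten_nseq (n : {set V} -> nat) (P : pred {set V}) :
  count P (flatten [seq nseq (n X) X | X <- enum {set V}]) = \sum_(X | P X) n X.
Proof.
rewrite count_flatten -map_comp sumnE big_map big_enum [RHS]big_mkcond /=.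
by apply: eq_bigr => X _; rewrite count_nseq; case: (P X); rewrite ?mul1n ?mul0n.
Qed.

Lemma int_cover_ocolorable C (n : {set V} -> nat) m k :
  consistent_classes arc C -> (forall X, 0 < n X -> X \in C) ->
  (forall v, \sum_(X : {set V} | v \in X) n X = m) -> \sum_X n X <= k ->
  ocolorable arc m k.
Proof.
move=> C_cons n_supp n_cov n_tot.
pose s := flatten [seq nseq (n X) X | X <- enum {set V}].
apply/asboolP; exists (realize k s); apply: (realize_ocoloring C_cons).
- move=> X /flatten_mapP[Y _]; rewrite mem_nseq => /andP[nY /eqP ->].
  exact: n_supp.
- by rewrite -count_predT count_flatten_nseq.
- by move=> v; rewrite count_flatten_nseq n_cov.
Qed.

Lemma exists_ocolorable b : oriented arc -> exists k, ocolorable arc b k.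
Proof.
case=> arc_irr arc_asym; pose C := [set [set v] | v : V].
exists (\sum_X b * (X \in C)).
apply: (int_cover_ocolorable (C := C) (n := fun X => b * (X \in C))) => //.
- move=> _ _ /imsetP[v _ ->] /imsetP[v' _ ->] x y z w.
  rewrite !inE => /eqP-> /eqP-> /eqP-> /eqP-> vv'.
  by rewrite (negbTE (arc_asym _ _ vv')).
- by move=> X; rewrite muln_gt0 lt0b => /andP[].
- move=> v; rewrite (bigD1 [set v]) ?set11 //= big1 => [|X /andP[vX Xv]].
    by rewrite imset_f ?muln1 ?addn0.
  apply/eqP; rewrite muln_eq0 eqb0; apply/orP; right; apply/negP => /imsetP[u _ Xu].
  by move: vX Xv; rewrite Xu inE => /eqP->; rewrite eqxx.
Qed.

End IntegerCovers.

Section CoversAndColorings.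
Variables (V : finType) (arc : rel V).
Local Open Scope ring_scope.

Lemma ocoloring_frac_cover b k (f : V -> {set 'I_k}) : (0 < b)%N -> (forall v, #|f v| = b) ->
  has_frac_cover (color_classes f) (k%:R / b%:R).
Proof.
move=> b_gt0 f_card; pose class i := [set v | i \in f v].
exists (fun o => if o is Some X then #|[set i | class i == X]|%:R / b%:R else k%:R / b%:R).
split=> //; split=> [X|X XC|v|].
- by rewrite divr_ge0 ?ler0n.
- suff -> : [set i | class i == X] = finset.set0 by rewrite cards0 mul0r.
  apply/setP => i; rewrite !inE; apply: contraNF XC => /eqP<-; exact: imset_f.
- rewrite -mulr_suml -natr_sum sum_card_fibers.
  have -> : [set i | v \in class i] = f v by apply/setP => i; rewrite !inE.
  by rewrite f_card divff // pnatr_eq0 -lt0n.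
- rewrite -mulr_suml -natr_sum sum_card_fibers (eq_card (B := 'I_k)) ?card_ord //.
  by move=> i; rewrite !inE.
Qed.

Lemma frac_cover_ocolorable C a b : (0 < b)%N -> consistent_classes arc C ->
  has_frac_cover C (a%:R / b%:R) -> exists2 c, (0 < c)%N & ocolorable arc (b * c) (a * c).
Proof.
move=> b_gt0 C_cons [x [xab [x_ge0 x_out x_cov x_tot]]].
have [q q_gt0 [n xq]] := clear_denominators x_ge0.
have sum_n (P : pred {set V}) :
    (\sum_(X | P X) n X)%:R = q%:R * \sum_(X | P X) x (Some X) :> rat.
  by rewrite natr_sum mulr_sumr; apply: eq_bigr => X _; rewrite -xq mulrC.
exists q => //; apply: (@int_cover_ocolorable _ _ C (fun X => b * n X)%N _ _ C_cons).
- move=> X; rewrite muln_gt0 b_gt0 lt0n; apply: contraNT => /x_out X_out.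
  rewrite -(eqr_nat rat) -xq (_ : x (Some X) = 0) ?mul0r //.
  by apply/eqP; rewrite eq_le X_out x_ge0.
- move=> v; rewrite -big_distrr /=; congr (_ * _)%N.
  by apply/eqP; rewrite -(eqr_nat rat) sum_n x_cov mulr1.
- rewrite -big_distrr -(ler_nat rat) !natrM sum_n mulrCA [a%:R * _]mulrC.
  rewrite ler_pM2l ?ltr0n // mulrC -ler_pdivlMr ?ltr0n //.
  by rewrite -xab.
Qed.

End CoversAndColorings.

Lemma exists_forall_antitone (T : finType) (P : nat -> T -> Prop) :
  (forall m, exists t, P m t) -> (forall m m' t, m <= m' -> P m' t -> P m t) ->
  exists t, forall m, P m t.
Proof.
move=> P_ex P_anti; apply: contrapT => /forallNP no_t.
have [M noM] : exists M, forall t, ~ P M t.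
  suff [M noM] : exists M, forall t, t \in enum T -> ~ P M t.
    by exists M => t; apply: noM; rewrite mem_enum.
  elim: (enum T) => [|t ts [M noM]]; first by exists 0.
  have /existsNP[Mt noMt] := no_t t; exists (maxn M Mt) => t'.
  rewrite inE => /predU1P[->|t'ts] PMt'.
    by apply: noMt; apply: P_anti PMt'; rewrite leq_maxr.
  by apply: (noM t' t'ts); apply: P_anti PMt'; rewrite leq_maxl.
by have [t PMt] := P_ex M; apply: noM PMt.
Qed.

Section FractionalOrientedChromaticNumber.
Variables (R : realType) (V : finType) (arc : rel V).
Local Open Scope ring_scope.

Lemma bfold_ochi_ocolorable b : oriented arc -> ocolorable arc b (bfold_ochi arc b).
Proof.
move=> /(exists_ocolorable b) ex; rewrite /bfold_ochi.
by case: pselect => [?|//]; case: ex_minnP.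
Qed.

Lemma bfold_ochi_min b k : ocolorable arc b k -> (bfold_ochi arc b <= k)%N.
Proof.
move=> bk; rewrite /bfold_ochi; case: pselect => [?|[]]; last by exists k.
by case: ex_minnP => m _; apply.
Qed.

Lemma frac_ochi_le b k : (0 < b)%N -> ocolorable arc b k -> frac_ochi R arc <= k%:R / b%:R.
Proof.
move=> b_gt0 bk; apply: le_trans (ge_inf _ _) _.
- by exists 0 => _ [b' _ <-]; rewrite divr_ge0.
- by exists b.
- by rewrite ler_pM2r ?invr_gt0 ?ltr0n // ler_nat bfold_ochi_min.
Qed.

Lemma ratr_nat_div (k b : nat) : ratr (k%:R / b%:R) = k%:R / b%:R :> R.
Proof. by rewrite fmorph_div !rmorph_nat. Qed.

Lemma frac_ochi_frac_cover (q : rat) : oriented arc -> frac_ochi R arc <= ratr q ->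
  exists2 C, consistent_classes arc C & has_frac_cover C q.
Proof.
move=> arc_or chi_le.
pose good m C := consistent_classes arc C /\ has_frac_cover C (q + m.+1%:R^-1).
have [C goodC] : exists C, forall m, good m C.
  apply: exists_forall_antitone => [m|m m' C mm' [C_cons C_cov]]; last first.
    split=> //; apply: has_frac_cover_le _ C_cov.
    by rewrite lerD2l lef_pV2 ?posrE ?ltr0n // ler_nat ltnS.
  have : frac_ochi R arc < ratr (q + m.+1%:R^-1).
    by apply: le_lt_trans chi_le _; rewrite ltr_rat ltrDl invr_gt0 ltr0n.
  case/inf_lt => [|_ [b b_gt0 <-]]; first by exists (bfold_ochi arc 1)%:R, 1%N; rewrite ?divr1.
  rewrite -ratr_nat_div ltr_rat => chi_b_lt.
  have /asboolP[f f_col] := bfold_ochi_ocolorable b arc_or.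
  exists (color_classes f); split; first exact: color_classes_consistent f_col.
  have [f_card _ _] := f_col.
  exact: has_frac_cover_le (ltW chi_b_lt) (ocoloring_frac_cover b_gt0 f_card).
exists C; first exact: (goodC 0%N).1.
by apply: has_frac_cover_closed => m; case: (goodC m).
Qed.

End FractionalOrientedChromaticNumber.

Theorem theorem1 (R : realType) (V : finType) (arc : rel V)
  (HG : oriented arc) (a b : nat) (ha : (0 < a)%N) (hb : (0 < b)%N) :
  (frac_ochi R arc <= (a%:R / b%:R : R))%R <->
  exists c : nat, (0 < c)%N /\
    exists A : rel {set 'I_(a * c)},
      consistent_suborientation (b * c) A /\
      exists g : V -> {set 'I_(a * c)}, kneser_hom arc (b * c) A g.
Proof.
have bc_gt0 c : (0 < c)%N -> (0 < b * c)%N by rewrite muln_gt0 hb.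
split=> [chi_le|[c [c_gt0 [A [A_cons [g g_hom]]]]]].
  rewrite -ratr_nat_div in chi_le.
  have [C C_cons C_cov] := frac_ochi_frac_cover HG chi_le.
  have [c c_gt0 /asboolP[f f_col]] := frac_cover_ocolorable hb C_cons C_cov.
  have [A [A_cons f_hom]] := ocoloring_kneser_hom (bc_gt0 c c_gt0) f_col.
  by exists c; split=> //; exists A; split=> //; exists f.
have g_col : ocolorable arc (b * c) (a * c).
  by apply/asboolP; exists g; apply: kneser_hom_ocoloring A_cons g_hom.
have := frac_ochi_le R (bc_gt0 c c_gt0) g_col.
by rewrite !natrM -mulf_div divff ?mulr1 // pnatr_eq0 -lt0n.
Qed.
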